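(* The functions $\Phi_\circ,\Phi_\bullet:\mathrm{NW}(\Delta)\to\mathrm{TXT}(\Delta)$ are unambiguously FO-definable (as transductions from nested-word structures to text structures).
   Context: Nested words: $\Delta$ finite alphabet. A nesting relation of width $n$ is a relation $\nu$ on $[n]$ with: $\nu(i,j)\Rightarrow i<j$; $\nu(i,j),\nu(i,j')\Rightarrow j=j'$ and $\nu(i,j),\nu(i',j)\Rightarrow i=i'$; $\nu(i,j),\nu(i',j'),i<i'\Rightarrow j<i'$ or $j'<j$. A nested word is $(w,\nu)$ with $w=a_1\cdots a_n\in\Delta^+$ and $\nu$ a nesting relation of width $n$; $\mathrm{NW}(\Delta)$ is their set; it is viewed as the structure with domain $[n]$, unary $\mathrm{Lab}_a=\{i:a_i=a\}$, natural order $\le$ and binary $\nu$. Factor $nw[i,j]=(a_i\cdots a_j,\{(k-i+1,\ell-i+1):(k,\ell)\in\nu,i\le k,\ell\le j\})$. Texts: a text is $(V,\lambda,\le_1,\le_2)$, $V$ finite nonempty, $\lambda:V\to\Delta$, $\le_1,\le_2$ linear orders, up to isomorphism; it is viewed as a structure with unary $\mathrm{Lab}_a$ and binary $\le_1,\le_2$. $\tau\circ\tau'$ (resp. $\tau\bullet\tau'$) is the disjoint union with all elements of $\tau$ before those of $\tau'$ in $\le_1$, and in $\le_2$ all of $\tau$ before $\tau'$ (resp. all of $\tau'$ before $\tau$). $\mathrm{TXT}(\Delta)$ (alternating texts) is the set of texts generated from singleton texts by $\circ$ and $\bullet$. $\Phi_\circ,\Phi_\bullet$: if $\nu=\emptyset$,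 $\Phi_\circ(nw)=a_1\circ\cdots\circ a_n$, $\Phi_\bullet(nw)=a_1\bullet\cdots\bullet a_n$; otherwise with $i$ the least call, $j$ its return, $nw'=nw[i+1,j-1]$, $nw''=nw[j+1,n]$: $\Phi_\circ(nw)=a_1\circ\cdots\circ a_{i-1}\circ(a_i\bullet\Phi_\bullet(nw')\bullet a_j)\circ\Phi_\circ(nw'')$, $\Phi_\bullet(nw)=a_1\bullet\cdots\bullet a_{i-1}\bullet(a_i\circ\Phi_\circ(nw')\circ a_j)\bullet\Phi_\bullet(nw'')$, omitting factors for empty intervals. Definability: for signatures $\sigma_1,\sigma_2=(R_i)_{i\in I}$, a 1-copying definition scheme with parameters $X_1..X_n$ is $\mathcal D=(\theta,\delta,(\varphi_i)_{i\in I})$ of classical MSO($\sigma_1$) formulas with free variables among $\{X_1..X_n\}$, $\{x_1,X_1..X_n\}$, $\{x_1..x_{\rho(R_i)},X_1..X_n\}$. For $s_1$ and $T_1..T_n$ with $s_1\models\theta[T_1..T_n]$, $\mathrm{def}_{\mathcal D}(s_1,\bar T)$ has domain $\{v:s_1\models\delta[v,\bar T]\}$ and $R_i=\{\bar v: s_1\models\varphi_i[\bar v,\bar T]\}$ (restricted to this domain). The transduction $\mathrm{def}_{\mathcal D}$ relates $s_1$ to all such $\mathrm{def}_{\mathcal D}(s_1,\bar T)$. $\mathcal D$ is unambiguous if for each related pair $(s_1,s_2)$ there is at most one $\bar T$ producing $s_2$. A (partial) function is unambiguously FO-definable if it equals $\mathrm{def}_{\mathcal D}$ for an unambiguous $\mathcal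 D$ all of whose formulas are first-order. *)

From Stdlib Require Import Bool.
From mathcomp Require Import all_boot.
Set Implicit Arguments. Unset Strict Implicit. Unset Printing Implicit Defensive.

Section Defs.
Variable Delta : finType.

(* A nested word: a word w over Delta and a relation nu on positions.
   Positions are 0-based: 0 .. size w - 1 (the paper's position i is our i-1). *)
Record nword := NWord { nw_word : seq Delta; nw_nest : rel nat }.

Definition is_nesting (n : nat) (nu : rel nat) : Prop :=
  (forall i j, nu i j -> i < j /\ j < n) /\
  (forall i j j', nu i j -> nu i j' -> j = j') /\
  (forall i i' j, nu i j -> nu i' j -> i = i') /\
  (forall i j i' j', nu i j -> nu i' j' -> i < i' -> j < i' \/ j' < j).

Definition is_nw (nw : nword) : Prop :=
  0 < size (nw_word nw) /\ is_nesting (size (nw_word nw)) (nw_nest nw).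

Record tstruct := TStruct {
  sdom : finType;
  slab : Delta -> pred sdom;
  sle1 : rel sdom;
  sle2 : rel sdom }.
Arguments slab : clear implicits.
Arguments sle1 : clear implicits.
Arguments sle2 : clear implicits.

Definition tiso (A B : tstruct) : Prop :=
  exists f : sdom A -> sdom B, bijective f /\
    (forall a x, slab B a (f x) = slab A a x) /\
    (forall x y, sle1 B (f x) (f y) = sle1 A x y) /\
    (forall x y, sle2 B (f x) (f y) = sle2 A x y).

Definition tsingle (a : Delta) : tstruct :=
  @TStruct unit (fun b _ => b == a) (fun _ _ => true) (fun _ _ => true).

Definition tempty : tstruct :=
  @TStruct void (fun _ _ => false) (fun _ _ => false) (fun _ _ => false).

Definition tsum (par : bool) (A B : tstruct) : tstruct :=
  @TStruct (sdom A + sdom B)%type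
    (fun a x => match x with inl y => slab A a y | inr y => slab B a y end)
    (fun x y => match x, y with
                | inl x, inl y => sle1 A x y | inr x, inr y => sle1 B x y
                | inl _, inr _ => true | inr _, inl _ => false end)
    (fun x y => match x, y with
                | inl x, inl y => sle2 A x y | inr x, inr y => sle2 B x y
                | inl _, inr _ => par | inr _, inl _ => ~~ par end).

Definition tcirc := tsum true.
Definition tbull := tsum false.

Inductive aterm := ASing of Delta | ACirc of aterm & aterm | ABull of aterm & aterm.

Fixpoint tstr_of (t : aterm) : tstruct :=
  match t with
  | ASing a => tsingle a
  | ACirc t u => tcirc (tstr_of t) (tstr_of u)
  | ABull t u => tbull (tstr_of t) (tstr_of u)
  end.

Definition tstr_of_opt (o : option aterm) : tstruct :=
  if o is Some t then tstr_of t else tempty.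

(* b = true : the operation o ; b = false : the operation . *)
Definition join (b : bool) (o1 o2 : option aterm) : option aterm :=
  match o1, o2 with
  | Some t, Some u => Some (if b then ACirc t u else ABull t u)
  | Some t, None => Some t
  | None, u => u
  end.

Definition chain (b : bool) (s : seq Delta) : option aterm :=
  foldr (fun a acc => join b (Some (ASing a)) acc) None s.

Section Phi.
Variable nw : nword.
Let w := nw_word nw.
Let nu := nw_nest nw.

Definition sub (i j : nat) : seq Delta := take (j - i) (drop i w).

(* phi fuel b i j = Phi_b of the factor on positions i .. j-1
   (None if the factor is empty) *)
Fixpoint phi (fuel : nat) (b : bool) (i j : nat) : option aterm :=
  match fuel with
  | 0 => None
  | fuel'.+1 =>
    if j <= i then None else
    let ks := iota i (j - i) in
    (* index of the least call of the factor (calls whose return is in the factor) *)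
    let idx := find (fun k => has (nu k) ks) ks in
    if idx == size ks then chain b (sub i j)
    else
      let k := i + idx in
      let l := i + find (nu k) ks in    (* its return *)
      let inner := join (~~ b) (join (~~ b) (chain (~~ b) (sub k k.+1))
                                            (phi fuel' (~~ b) k.+1 l))
                               (chain (~~ b) (sub l l.+1)) in
      join b (join b (chain b (sub i k)) inner) (phi fuel' b l.+1 j)
  end.

Definition PhiC : tstruct := tstr_of_opt (phi (size w) true 0 (size w)).
Definition PhiB : tstruct := tstr_of_opt (phi (size w) false 0 (size w)).
End Phi.

(* fo m k : first-order formulas with free set variables among X_0..X_(m-1)
   and free first-order variables among x_0 .. x_(k-1) (de Bruijn: the
   variable bound by the innermost quantifier is x_0). *)
Inductive fo (m : nat) : nat -> Type :=
| FLab k (a : Delta) (x : 'I_k) : fo m k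
| FLe k (x y : 'I_k) : fo m k
| FNu k (x y : 'I_k) : fo m k
| FEq k (x y : 'I_k) : fo m k
| FIn k (x : 'I_k) (X : 'I_m) : fo m k
| FNot k (f : fo m k) : fo m k
| FAnd k (f g : fo m k) : fo m k
| FEx k (f : fo m k.+1) : fo m k.

Definition env_ext (T : Type) k (v : 'I_k -> T) (p : T) : 'I_k.+1 -> T :=
  fun i => if unlift ord0 i is Some j then v j else p.

Definition env0 (T : Type) : 'I_0 -> T :=
  fun i => False_rect T ((@Bool.diff_false_true) (etrans (esym (ltn0 i)) (ltn_ord i))).
Definition env1 (T : Type) (x : T) : 'I_1 -> T := fun _ => x.
Definition env2 (T : Type) (x y : T) : 'I_2 -> T := fun i => if i == ord0 then x else y.

Section Sat.
Variable nw : nword.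
Let n := size (nw_word nw).
Let lab (i : 'I_n) : Delta := tnth (in_tuple (nw_word nw)) i.
Variable m : nat.
Variable T : 'I_m -> {set 'I_n}.

Fixpoint sat k (f : fo m k) : ('I_k -> 'I_n) -> bool :=
  match f in fo _ k return ('I_k -> 'I_n) -> bool with
  | FLab _ a x => fun v => lab (v x) == a
  | FLe _ x y => fun v => (v x <= v y)%N
  | FNu _ x y => fun v => nw_nest nw (v x) (v y)
  | FEq _ x y => fun v => v x == v y
  | FIn _ x X => fun v => v x \in T X
  | FNot _ f => fun v => ~~ sat f v
  | FAnd _ f g => fun v => sat f v && sat g v
  | FEx _ f => fun v => [exists p : 'I_n, sat f (env_ext v p)]
  end.
End Sat.

(* 1-copying FO definition scheme from the nested-word signature to the
   text signature, with m set parameters *)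
Record scheme (m : nat) := Scheme {
  sc_theta : fo m 0;
  sc_delta : fo m 1;
  sc_lab : Delta -> fo m 1;
  sc_le1 : fo m 2;
  sc_le2 : fo m 2 }.

Definition def_str m (D : scheme m) (nw : nword)
    (T : 'I_m -> {set 'I_(size (nw_word nw))}) : tstruct :=
  @TStruct {i : 'I_(size (nw_word nw)) | sat T (sc_delta D) (env1 i)}
    (fun a x => sat T (sc_lab D a) (env1 (val x)))
    (fun x y => sat T (sc_le1 D) (env2 (val x) (val y)))
    (fun x y => sat T (sc_le2 D) (env2 (val x) (val y))).

Definition theta_holds m (D : scheme m) (nw : nword)
    (T : 'I_m -> {set 'I_(size (nw_word nw))}) : bool :=
  sat T (sc_theta D) (@env0 _).

Arguments def_str [m] D nw T.
Arguments theta_holds [m] D nw T.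

Definition unambiguous m (D : scheme m) : Prop :=
  forall nw, is_nw nw ->
  forall T T', theta_holds D nw T -> theta_holds D nw T' ->
    tiso (def_str D nw T) (def_str D nw T') -> T = T'.

Definition defines m (D : scheme m) (Phi : nword -> tstruct) : Prop :=
  forall nw, is_nw nw ->
    (exists T, theta_holds D nw T) /\
    (forall T, theta_holds D nw T -> tiso (def_str D nw T) (Phi nw)).

Definition unamb_FO_definable (Phi : nword -> tstruct) : Prop :=
  exists m (D : scheme m), unambiguous D /\ defines D Phi.

End Defs.

From mathcomp Require Import all_boot zify.
From Stdlib Require Import FunctionalExtensionality.
Set Implicit Arguments. Unset Strict Implicit. Unset Printing Implicit Defensive.

(* The set parameter is the set of calls at even nesting depth. It is
   FO-definable as the unique set X such that a call lies in X iff its parent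
   call does not, which makes the scheme unambiguous. The output keeps every
   position, ordered by <=1 as in the word. For p < q, whether p <=2 q is
   decided by the innermost call enclosing both p and q: if there is none, by
   the outermost operation of Phi, and otherwise by that operation flipped
   according to the depth parity of this call. Following the recursion that
   defines Phi, the text Phi(nw) is isomorphic to this structure. *)

Lemma inj_surj_bij (A B : finType) (f : A -> B) :
  injective f -> (forall y, exists x, f x = y) -> bijective f.
Proof.
move=> f_inj f_surj; apply: inj_card_bij => //.
rewrite -(card_codom f_inj); apply: subset_leq_card; apply/subsetP => y _.
by have [x <-] := f_surj y; exact: codom_f.
Qed.

Section TextIsomorphism.
Variable Delta : finType.
Implicit Types A B C : tstruct Delta.

Lemma tiso_refl A : tiso A A.
Proof. by exists id; split; first exists id. Qed.

Lemma tiso_sym A B : tiso A B -> tiso B A.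
Proof.
case=> f [[g fK gK] [f_lab [f_le1 f_le2]]]; exists g; split; first by exists f.
split; first by move=> a x; rewrite -(f_lab a (g x)) gK.
by split=> x y; rewrite -?f_le1 -?f_le2 !gK.
Qed.

Lemma tiso_trans A B C : tiso A B -> tiso B C -> tiso A C.
Proof.
case=> f [f_bij [f_lab [f_le1 f_le2]]] [g [g_bij [g_lab [g_le1 g_le2]]]].
exists (g \o f); split; first exact: bij_comp.
by split=> [a x|]; [|split=> x y] => /=; rewrite ?g_lab ?f_lab ?g_le1 ?f_le1 ?g_le2 ?f_le2.
Qed.

Lemma tiso_sum b A A' B B' : tiso A A' -> tiso B B' -> tiso (tsum b A B) (tsum b A' B').
Proof.
case=> f [[f' fK f'K] [f_lab [f_le1 f_le2]]] [g [[g' gK g'K] [g_lab [g_le1 g_le2]]]].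
exists (fun x => match x with inl y => inl (f y) | inr y => inr (g y) end); split.
  exists (fun x => match x with inl y => inl (f' y) | inr y => inr (g' y) end).
    by case=> y; rewrite ?fK ?gK.
  by case=> y; rewrite ?f'K ?g'K.
by split=> [a [y|y] | ] /=; last split=> [] [x|x] [y|y].
Qed.

Lemma tiso_sum_empty_r b A : tiso A (tsum b A (tempty Delta)).
Proof.
exists inl; split; last by split=> [a x|]; [|split=> x y].
apply: inj_surj_bij => [x y [] // | [y|[]]].
by exists y.
Qed.

Lemma tiso_sum_empty_l b B : tiso B (tsum b (tempty Delta) B).
Proof.
exists inr; split; last by split=> [a x|]; [|split=> x y].
apply: inj_surj_bij => [x y [] // | [[]|y]].
by exists y.
Qed.

Lemma tiso_join b (o1 o2 : option (aterm Delta)) :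
  tiso (tstr_of_opt (join b o1 o2)) (tsum b (tstr_of_opt o1) (tstr_of_opt o2)).
Proof.
case: o1 => [t|] /=; last exact: tiso_sum_empty_l.
case: o2 => [u|] /=; last exact: tiso_sum_empty_r.
by case: b; apply: tiso_refl.
Qed.

End TextIsomorphism.

Section PositionStructure.
Variables (Delta : finType) (nw : nword Delta) (lt2 : nat -> nat -> bool).
Local Notation w := (nw_word nw).
Local Notation n := (size (nw_word nw)).

Definition le2 p q := if p < q then lt2 p q else if q < p then ~~ lt2 q p else true.

Definition pos_str i j : tstruct Delta :=
  @TStruct Delta {p : 'I_n | i <= p < j}
    (fun a p => tnth (in_tuple w) (val p) == a)
    (fun p q => val p <= val q) (fun p q => le2 (val p) (val q)).

Lemma pos_str_empty i j : j <= i -> tiso (tstr_of_opt None) (pos_str i j).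
Proof.
move=> le_ji; exists (@of_void _); split; last by split=> [a []|]; split=> -[].
apply: inj_surj_bij => [[] | [p p_in]].
by exfalso; move/andP: p_in; lia.
Qed.

Lemma pos_str_single k (lt_kn : k < n) a :
  tiso (tstr_of_opt (Some (ASing (nth a w k)))) (pos_str k k.+1).
Proof.
have kP : k <= Ordinal lt_kn < k.+1 by apply/andP.
exists (fun _ => exist _ (Ordinal lt_kn) kP); split.
  apply: inj_surj_bij => [[] [] // | [p p_in]].
  by exists tt; apply: val_inj; apply: val_inj => /=; lia.
split; first by move=> b [] /=; rewrite (tnth_nth a) eq_sym.
by split=> -[] [] /=; rewrite /le2 ?leqnn ?ltnn.
Qed.

Lemma pos_str_split b i k j : i <= k -> k <= j ->
  (forall p q, i <= p -> p < k -> k <= q -> q < j -> lt2 p q = b) ->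
  tiso (tsum b (pos_str i k) (pos_str k j)) (pos_str i j).
Proof.
move=> le_ik le_kj lt2_across.
have inl_in (p : 'I_n) : i <= p < k -> i <= p < j.
  by case/andP=> -> lt_pk; rewrite (leq_trans lt_pk le_kj).
have inr_in (p : 'I_n) : k <= p < j -> i <= p < j.
  by case/andP=> le_kp ->; rewrite (leq_trans le_ik le_kp).
exists (fun x => match x with inl y => exist _ (val y) (inl_in _ (valP y))
                      | inr y => exist _ (val y) (inr_in _ (valP y)) end); split.
  apply: inj_surj_bij.
    move=> [x|x] [y|y] /= /(congr1 val) /= e; try by congr (_ _); apply: val_inj.
      by have := valP x; have := valP y; rewrite /= e; lia.
    by have := valP x; have := valP y; rewrite /= e; lia.
  case=> p p_in; case: (ltnP (val p) k) => [lt_pk | le_kp].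
    have p_in' : i <= p < k by case/andP: p_in => -> _.
    by exists (inl (exist _ p p_in')); apply: val_inj.
  have p_in' : k <= p < j by case/andP: p_in => _ ->; rewrite le_kp.
  by exists (inr (exist _ p p_in')); apply: val_inj.
split; first by move=> a [] [].
split=> -[] [p p_in] [] [q q_in] //=; move: p_in q_in => /andP [? ?] /andP [? ?].
- by apply/idP; lia.
- by apply/negP; lia.
- have lt_pq : p < q by lia.
  by rewrite /le2 lt_pq lt2_across.
- have lt_qp : q < p by lia.
  by rewrite /le2 ltnNge (ltnW lt_qp) lt_qp (lt2_across q p).
Qed.

Lemma join_pos_str b i k j o1 o2 : i <= k -> k <= j ->
  (forall p q, i <= p -> p < k -> k <= q -> q < j -> lt2 p q = b) ->
  tiso (tstr_of_opt o1) (pos_str i k) -> tiso (tstr_of_opt o2) (pos_str k j) ->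
  tiso (tstr_of_opt (join b o1 o2)) (pos_str i j).
Proof.
move=> le_ik le_kj lt2_across iso1 iso2.
apply: tiso_trans (tiso_join _ _ _) _.
exact: tiso_trans (tiso_sum b iso1 iso2) (pos_str_split le_ik le_kj lt2_across).
Qed.

Lemma sub_cons a i j : i < j -> j <= n -> sub nw i j = nth a w i :: sub nw i.+1 j.
Proof.
move=> lt_ij le_jn; rewrite /sub (drop_nth a); last exact: leq_trans lt_ij le_jn.
by rewrite subnS -(subnSK lt_ij).
Qed.

Lemma chain_pos_str b i j : j <= n ->
  (forall p q, i <= p -> p < q -> q < j -> lt2 p q = b) ->
  tiso (tstr_of_opt (chain b (sub nw i j))) (pos_str i j).
Proof.
move=> le_jn; move Ed: (j - i) => d; elim: d i Ed => [|d IH] i Ed lt2_in.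
  by rewrite /sub Ed take0; apply: pos_str_empty; lia.
have lt_ij : i < j by lia.
have lt_in : i < n := leq_trans lt_ij le_jn.
pose a := tnth (in_tuple w) (Ordinal lt_in).
rewrite (sub_cons a lt_ij le_jn).
apply: (join_pos_str (k := i.+1)) => //; first by move=> p q *; apply: lt2_in; lia.
  exact: pos_str_single.
by apply: IH => [|p q *]; [lia | apply: lt2_in; lia].
Qed.

End PositionStructure.

Section Nesting.
Variables (Delta : finType) (nw : nword Delta).
Local Notation n := (size (nw_word nw)).
Local Notation nu := (nw_nest nw).

Definition greatest (P : pred nat) c := P c && ~~ has (fun c' => (c < c') && P c') (iota 0 n).

Definition is_call c := has (nu c) (iota 0 n).
Definition encloses c p q := (c <= p) && has (fun r => nu c r && (q <= r)) (iota 0 n).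
Definition above c' c := (c' < c) && has (fun r => nu c' r && (c < r)) (iota 0 n).
Definition innermost c p q := greatest (fun c' => encloses c' p q) c.
Definition parent c c' := greatest (above^~ c) c'.

Fixpoint even_depth_fuel fuel c :=
  if fuel is f.+1 then ~~ has (fun c' => parent c c' && even_depth_fuel f c') (iota 0 n)
  else true.
(* Fuel [c.+1] suffices: parents lie strictly to the left. *)
Definition even_depth c := even_depth_fuel c.+1 c.

Definition even_meet p q := has (fun c => innermost c p q && even_depth c) (iota 0 n).
(* For p < q, whether p <=2 q in Phi(nw), where [b0] is the outermost
   operation (true for tcirc, false for tbull). *)
Definition lt2_nest b0 p q := b0 (+) even_meet p q.

Lemma parent_lt c c' : parent c c' -> c' < c.
Proof. by case/andP=> /andP []. Qed.

Lemma even_depth_fuel_enough f g c :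
  c < f -> c < g -> even_depth_fuel f c = even_depth_fuel g c.
Proof.
elim: f g c => // f IH [|g] c // lt_cf lt_cg /=; congr negb; apply: eq_has => c' /=.
by case par: (parent c c') => //=; have := parent_lt par => lt_c'c; apply: IH; lia.
Qed.

Lemma even_depthE c :
  even_depth c = ~~ has (fun c' => parent c c' && even_depth c') (iota 0 n).
Proof.
congr negb; apply: eq_has => c' /=.
by case par: (parent c c') => //=; have := parent_lt par => lt_c'c; apply: even_depth_fuel_enough.
Qed.

Lemma encloses_call c p q : encloses c p q -> is_call c.
Proof. by case/andP=> _; apply: sub_has => r /andP []. Qed.

Lemma above_call c' c : above c' c -> is_call c'.
Proof. by case/andP=> _; apply: sub_has => r /andP []. Qed.

Lemma has_iota_exists (P : pred nat) : has P (iota 0 n) = [exists c : 'I_n, P c].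
Proof.
apply/hasP/existsP => [[c c_in Pc] | [c Pc]]; last by exists (val c) => //; rewrite mem_iota /=.
by rewrite mem_iota in c_in; exists (Ordinal c_in).
Qed.

Lemma even_depth_exists c : even_depth c =
  ~~ [exists c' : 'I_n, parent c c' && (is_call c' && even_depth c')].
Proof.
rewrite even_depthE has_iota_exists; congr negb; apply: eq_existsb => c'.
by case par: (parent c c'); rewrite //= (above_call (c := c)) //; case/andP: par.
Qed.

Hypothesis nest : is_nesting n nu.

Lemma nest_lt c r : nu c r -> c < r /\ r < n.
Proof. by case: nest => h _; apply: h. Qed.

Lemma nest_return_uniq c r r' : nu c r -> nu c r' -> r = r'.
Proof. by case: nest => _ [h _]; apply: h. Qed.

Lemma nest_well_nested c r c' r' : nu c r -> nu c' r' -> c < c' -> r < c' \/ r' < r.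
Proof. by case: nest => _ [_ [_ h]]; apply: h. Qed.

Lemma nest_return_not_call c r r' : nu c r -> nu r r' -> False.
Proof.
move=> ncr nrr'; have [lt_cr _] := nest_lt ncr; have [lt_rr' _] := nest_lt nrr'.
by case: (nest_well_nested ncr nrr' lt_cr); lia.
Qed.

Lemma nest_inside k l c r : nu k l -> nu c r -> k < c -> c < l -> r < l.
Proof. by move=> nkl ncr lt_kc lt_cl; case: (nest_well_nested nkl ncr lt_kc); lia. Qed.

Lemma mem_iota_size c : (c \in iota 0 n) = (c < n).
Proof. by rewrite mem_iota. Qed.

Lemma has_returnP c (P : pred nat) :
  reflect (exists2 r, nu c r & P r) (has (fun r => nu c r && P r) (iota 0 n)).
Proof.
apply: (iffP hasP) => [[r _ /andP [ncr Pr]] | [r ncr Pr]]; first by exists r.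
by exists r; [rewrite mem_iota_size; case: (nest_lt ncr) | rewrite ncr].
Qed.

Lemma is_callP c : reflect (exists r, nu c r) (is_call c).
Proof.
apply: (iffP hasP) => [[r _ ncr] | [r ncr]]; first by exists r.
by exists r; rewrite // mem_iota_size; case: (nest_lt ncr).
Qed.

Lemma enclosesP c p q : reflect (c <= p /\ exists2 r, nu c r & q <= r) (encloses c p q).
Proof. by apply: (iffP andP) => -[le_cp /has_returnP]. Qed.

Lemma aboveP c' c : reflect (c' < c /\ exists2 r, nu c' r & c < r) (above c' c).
Proof. by apply: (iffP andP) => -[lt_c'c /has_returnP]. Qed.

Lemma encloses_lt c p q : encloses c p q -> c < n.
Proof. by case/enclosesP=> _ [r /nest_lt]; lia. Qed.

Lemma above_lt c' c : above c' c -> c' < n.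
Proof. by case/aboveP=> _ [r /nest_lt]; lia. Qed.

Lemma greatest_uniq (P : pred nat) c1 c2 :
  (forall c, P c -> c < n) -> greatest P c1 -> greatest P c2 -> c1 = c2.
Proof.
move=> P_lt /andP [P1 max1] /andP [P2 max2].
case: (ltngtP c1 c2) => // [lt12 | lt21].
  by case/hasP: max1; exists c2; rewrite ?lt12 // mem_iota_size P_lt.
by case/hasP: max2; exists c1; rewrite ?lt21 // mem_iota_size P_lt.
Qed.

Lemma has_greatest (P Q : pred nat) c : (forall c, P c -> c < n) -> greatest P c ->
  has (fun c' => greatest P c' && Q c') (iota 0 n) = Q c.
Proof.
move=> P_lt maxc; apply/hasP/idP => [[c' _ /andP [maxc' Qc']] | Qc].
  by rewrite -(greatest_uniq P_lt maxc' maxc).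
by exists c; rewrite ?maxc // mem_iota_size P_lt //; case/andP: maxc.
Qed.

Lemma even_meet_innermost c p q : innermost c p q -> even_meet p q = even_depth c.
Proof. by move=> inn; apply: has_greatest inn => c' /encloses_lt. Qed.

Lemma even_depth_parent c c' : parent c c' -> even_depth c = ~~ even_depth c'.
Proof.
by move=> par; rewrite even_depthE (has_greatest _ _ par) // => c'' /above_lt.
Qed.

End Nesting.

Section Levels.
Variables (Delta : finType) (nw : nword Delta) (b0 : bool).
Local Notation n := (size (nw_word nw)).
Local Notation nu := (nw_nest nw).
Local Notation lt2 := (lt2_nest nw b0).
Hypothesis nest : is_nesting n nu.

Definition closed i j := forall c r, nu c r -> (i <= c < j) = (i <= r < j).

(* [b] is the operation that Phi applies at the outermost level of the factor
   on positions [i, j). *)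
Definition level_inv b i j :=
  (forall p q, i <= p -> p < q -> q < j ->
     (forall c, i <= c -> ~~ encloses nw c p q) -> lt2 p q = b) /\
  (forall c, i <= c -> c < j -> is_call nw c ->
     (forall c', i <= c' -> ~~ above nw c' c) -> even_depth nw c = (b0 == b)).

Section FirstCall.
Variables (b : bool) (i j k l : nat).
Hypotheses (hcl : closed i j) (hinv : level_inv b i j).
Hypotheses (le_ik : i <= k) (nkl : nu k l) (lt_lj : l < j).
Hypothesis no_call_before : forall c, i <= c -> c < k -> forall r, ~~ nu c r.

Let lt_kl : k < l := (nest_lt nest nkl).1.

Lemma return_le_first_return c r : i <= c -> c <= l -> nu c r -> r <= l.
Proof.
move=> le_ic le_cl ncr; case: (ltngtP c k) => [lt_ck | lt_kc | eq_ck].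
- by move: (no_call_before le_ic lt_ck r); rewrite ncr.
- case: (ltngtP c l) => [lt_cl | | eq_cl]; try lia.
    exact: ltnW (nest_inside nest nkl ncr lt_kc lt_cl).
  by rewrite eq_cl in ncr; case: (nest_return_not_call nest nkl ncr).
- by rewrite eq_ck in ncr; rewrite (nest_return_uniq nest ncr nkl).
Qed.

Lemma lt2_before_first_call p q : i <= p -> p < k -> p < q -> q < j -> lt2 p q = b.
Proof.
move=> le_ip lt_pk lt_pq lt_qj; apply: hinv.1 => //.
move=> c le_ic; apply/(enclosesP nest) => -[le_cp [r ncr _]].
by move: (no_call_before le_ic (leq_ltn_trans le_cp lt_pk) r); rewrite ncr.
Qed.

Lemma lt2_after_first_return p q : i <= p -> p <= l -> l < q -> q < j -> lt2 p q = b.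
Proof.
move=> le_ip le_pl lt_lq lt_qj; apply: hinv.1 => //; first exact: leq_ltn_trans le_pl lt_lq.
move=> c le_ic; apply/(enclosesP nest) => -[le_cp [r ncr le_qr]].
by have := return_le_first_return le_ic (leq_trans le_cp le_pl) ncr; lia.
Qed.

Lemma even_depth_first_call : even_depth nw k = (b0 == b).
Proof.
have lt_kj : k < j by have := lt_kl; lia.
apply: hinv.2 => //; first by apply/(is_callP nest); exists l.
move=> c' le_ic'; apply/(aboveP nest) => -[lt_c'k [r nc'r _]].
by move: (no_call_before le_ic' lt_c'k r); rewrite nc'r.
Qed.

Lemma lt2_first_block p q : k <= p -> p < q -> q <= l ->
  (p = k \/ q = l \/ forall c, k < c -> ~~ encloses nw c p q) -> lt2 p q = ~~ b.
Proof.
move=> le_kp lt_pq le_ql outer.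
rewrite /lt2_nest (even_meet_innermost nest (c := k)).
  by rewrite even_depth_first_call; case: b0; case: b.
apply/andP; split.
  by apply/(enclosesP nest); split=> //; exists l.
apply/hasP => -[c _ /andP [lt_kc /(enclosesP nest) [le_cp [r ncr le_qr]]]].
case: outer => [eq_pk | [eq_ql | no_encl]]; first lia.
  case: (ltngtP c l) => [lt_cl | lt_lc | eq_cl].
  - by have := nest_inside nest nkl ncr lt_kc lt_cl; lia.
  - lia.
  - by rewrite eq_cl in ncr; case: (nest_return_not_call nest nkl ncr).
by move/negP: (no_encl c lt_kc); apply; apply/(enclosesP nest); split=> //; exists r.
Qed.

Lemma closed_after_first_return : closed l.+1 j.
Proof.
move=> c r ncr; have [lt_cr _] := nest_lt nest ncr; have := hcl ncr.
have := lt_kl; case: (leqP i c) => le_ic; last lia.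
case: (leqP c l) => le_cl; last lia.
by have := return_le_first_return le_ic le_cl ncr; lia.
Qed.

Lemma level_inv_after_first_return : level_inv b l.+1 j.
Proof.
split=> [p q lt_lp lt_pq lt_qj no_encl | c lt_lc lt_cj callc no_above].
  apply: hinv.1 => //; first lia.
  move=> c le_ic; case: (leqP c l) => [le_cl | lt_lc]; last exact: no_encl.
  apply/(enclosesP nest) => -[le_cp [r ncr le_qr]].
  by have := return_le_first_return le_ic le_cl ncr; lia.
apply: hinv.2 => //; first lia.
move=> c' le_ic'; case: (leqP c' l) => [le_c'l | lt_lc']; last exact: no_above.
apply/(aboveP nest) => -[_ [r nc'r lt_cr]].
by have := return_le_first_return le_ic' le_c'l nc'r; lia.
Qed.

Lemma closed_inside_first_call : closed k.+1 l.
Proof.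
move=> c r ncr; have [lt_cr _] := nest_lt nest ncr; have := hcl ncr; have := lt_kl.
case: (ltngtP c k) => [lt_ck | lt_kc | eq_ck].
- case: (leqP i c) => [le_ic | ]; last lia.
  by move: (no_call_before le_ic lt_ck r); rewrite ncr.
- case: (ltnP c l) => lt_cl; last lia.
  by have := nest_inside nest nkl ncr lt_kc lt_cl; lia.
- by rewrite eq_ck in ncr; rewrite (nest_return_uniq nest ncr nkl); lia.
Qed.

Lemma level_inv_inside_first_call : level_inv (~~ b) k.+1 l.
Proof.
split=> [p q lt_kp lt_pq lt_ql no_encl | c lt_kc lt_cl _ no_above].
  by apply: lt2_first_block; try lia; right; right.
have par : parent nw c k.
  apply/andP; split; first by apply/(aboveP nest); split=> //; exists l.
  by apply/hasP => -[c' _ /andP [lt_kc' above_c']]; move: (no_above c' lt_kc'); rewrite above_c'.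
by rewrite (even_depth_parent nest par) even_depth_first_call; case: b0; case: b.
Qed.

End FirstCall.

Section FirstCallSearch.
Variables i j : nat.
Hypothesis hcl : closed i j.
Local Notation ks := (iota i (j - i)).
Local Notation first := (find (fun k => has (nu k) ks) ks).

Lemma mem_interval c : (c \in ks) = (i <= c < j).
Proof. by rewrite mem_iota; lia. Qed.

Lemma has_nu_interval c : i <= c < j -> has (nu c) ks = is_call nw c.
Proof.
move=> c_in; apply/hasP/(is_callP nest) => [[r _ ncr] | [r ncr]]; first by exists r.
by exists r; rewrite // mem_interval -(hcl ncr).
Qed.

Lemma no_call_of_find : first = size ks -> forall c r, i <= c -> c < j -> ~~ nu c r.
Proof.
move=> no_first c r le_ic lt_cj; apply/negP => ncr.
have : has (fun k => has (nu k) ks) ks.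
  apply/hasP; exists c; first by rewrite mem_interval le_ic.
  by rewrite has_nu_interval ?le_ic //; apply/(is_callP nest); exists r.
by rewrite has_find no_first ltnn.
Qed.

Lemma first_call_of_find : first != size ks ->
  [/\ i <= i + first, nu (i + first) (i + find (nu (i + first)) ks),
      i + find (nu (i + first)) ks < j &
      forall c, i <= c -> c < i + first -> forall r, ~~ nu c r].
Proof.
move=> some_first.
have lt_first : first < j - i by rewrite -[X in _ < X](size_iota i) ltn_neqAle some_first find_size.
have has_first : has (fun k => has (nu k) ks) ks by rewrite has_find size_iota.
have := nth_find 0 has_first; rewrite nth_iota // => k_call.
have lt_ret : find (nu (i + first)) ks < j - i by rewrite -[X in _ < X](size_iota i) -has_find.
have := nth_find 0 k_call; rewrite nth_iota // => nkl.
split=> //; [exact: leq_addr | lia | move=> c le_ic lt_ck r].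
have := before_find 0 (_ : c - i < first); rewrite nth_iota; last lia.
rewrite subnKC // has_nu_interval; last lia.
by move=> /(_ ltac:(lia)) /(is_callP nest) no_ret; apply/negP => ncr; apply: no_ret; exists r.
Qed.

End FirstCallSearch.

Lemma phi_pos_str fuel b i j : j - i <= fuel -> j <= n -> closed i j -> level_inv b i j ->
  tiso (tstr_of_opt (phi nw fuel b i j)) (pos_str nw lt2 i j).
Proof.
elim: fuel b i j => [|fuel IH] b i j le_fuel le_jn hcl hinv /=.
  by apply: pos_str_empty; lia.
case: leqP => [le_ji | _]; first exact: pos_str_empty.
case: eqP => [no_first | /eqP some_first].
  apply: chain_pos_str => // p q le_ip lt_pq lt_qj; apply: hinv.1 => // c le_ic.
  apply/(enclosesP nest) => -[le_cp [r ncr _]].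
  have lt_cj : c < j by lia.
  by move: (no_call_of_find hcl no_first r le_ic lt_cj); rewrite ncr.
have [le_ik nkl lt_lj no_call_before] := first_call_of_find hcl some_first.
set k := i + _ in le_ik nkl lt_lj no_call_before *.
set l := i + _ in nkl lt_lj *.
have lt_kl := (nest_lt nest nkl).1.
apply: (join_pos_str (k := l.+1)); [lia | lia | | | apply: IH; [lia | done | | ]].
- exact: lt2_after_first_return hinv le_ik nkl lt_lj no_call_before.
- apply: (join_pos_str (k := k)); [lia | lia | | | ].
  + by move=> p q *; apply: (lt2_before_first_call hinv no_call_before); lia.
  + apply: chain_pos_str => [|p q *]; first lia.
    by apply: (lt2_before_first_call hinv no_call_before); lia.
  apply: (join_pos_str (k := l)); [lia | lia | | | ].
  + by move=> p q *; apply: (lt2_first_block hinv le_ik nkl lt_lj no_call_before); lia.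
  + apply: (join_pos_str (k := k.+1)); [lia | lia | | | ].
    * by move=> p q *; apply: (lt2_first_block hinv le_ik nkl lt_lj no_call_before); lia.
    * by apply: chain_pos_str => [|p q *]; lia.
    apply: IH; [lia | lia | |].
    * exact: closed_inside_first_call hcl le_ik nkl lt_lj no_call_before.
    * exact: level_inv_inside_first_call hinv le_ik nkl lt_lj no_call_before.
  + by apply: chain_pos_str => [|p q *]; lia.
- exact: closed_after_first_return hcl le_ik nkl lt_lj no_call_before.
- exact: level_inv_after_first_return hinv le_ik nkl lt_lj no_call_before.
Qed.

Lemma level_inv_word : level_inv b0 0 n.
Proof.
split=> [p q _ lt_pq lt_qn no_encl | c _ lt_cn _ no_above].
  rewrite /lt2_nest (_ : even_meet nw p q = false) ?addbF //.
  by apply/hasP => -[c _ /andP [/andP [encl _] _]]; move: (no_encl c (leq0n c)); rewrite encl.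
rewrite eqxx even_depthE; apply/hasP => -[c' _ /andP [/andP [above_c' _] _]].
by move: (no_above c' (leq0n c')); rewrite above_c'.
Qed.

Lemma phi_word_pos_str : tiso (tstr_of_opt (phi nw n b0 0 n)) (pos_str nw lt2 0 n).
Proof.
apply: phi_pos_str; rewrite ?subn0 //; last exact: level_inv_word.
by move=> c r ncr; have [lt_cr lt_rn] := nest_lt nest ncr; rewrite lt_rn (ltn_trans lt_cr lt_rn).
Qed.

End Levels.

Section Formulas.
Context {Delta : finType}.
Local Notation form := (fo Delta 1).

Definition v0 {k} : 'I_k.+1 := ord0.
Definition vS {k} (x : 'I_k) : 'I_k.+1 := lift ord0 x.

Definition FOr k (f g : form k) : form k := FNot (FAnd (FNot f) (FNot g)).
Definition FIff k (f g : form k) : form k := FAnd (FOr (FNot f) g) (FOr (FNot g) f).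
Definition FAll k (f : form k.+1) : form k := FNot (FEx (FNot f)).
Definition FLt k (x y : 'I_k) : form k := FAnd (FLe _ _ x y) (FNot (FEq _ _ x y)).
Definition FInX k (x : 'I_k) : form k := FIn _ x ord0.

Definition FCall k (c : 'I_k) : form k := FEx (FNu _ _ (vS c) v0).
Definition FEncloses k (c p q : 'I_k) : form k :=
  FAnd (FLe _ _ c p) (FEx (FAnd (FNu _ _ (vS c) v0) (FLe _ _ (vS q) v0))).
Definition FAbove k (c' c : 'I_k) : form k :=
  FAnd (FLt c' c) (FEx (FAnd (FNu _ _ (vS c') v0) (FLt (vS c) v0))).
Definition FInnermost k (c p q : 'I_k) : form k :=
  FAnd (FEncloses c p q) (FNot (FEx (FAnd (FLt (vS c) v0) (FEncloses v0 (vS p) (vS q))))).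
Definition FParent k (c c' : 'I_k) : form k :=
  FAnd (FAbove c' c) (FNot (FEx (FAnd (FLt (vS c') v0) (FAbove v0 (vS c))))).
Definition FEvenMeet k (p q : 'I_k) : form k :=
  FEx (FAnd (FInnermost v0 (vS p) (vS q)) (FInX v0)).
Definition FLt2 (b0 : bool) k (p q : 'I_k) : form k :=
  if b0 then FNot (FEvenMeet p q) else FEvenMeet p q.

Definition FLe2 b0 : form 2 :=
  FOr (FAnd (FLt v0 (vS v0)) (FLt2 b0 v0 (vS v0)))
      (FOr (FAnd (FLt (vS v0) v0) (FNot (FLt2 b0 (vS v0) v0))) (FEq _ _ v0 (vS v0))).

Definition FEvenCalls : form 0 :=
  FAll (FIff (FInX v0) (FAnd (FCall v0) (FNot (FEx (FAnd (FParent (vS v0) v0) (FInX v0)))))).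

Definition nest_scheme b0 : scheme Delta 1 :=
  Scheme FEvenCalls (FEq _ _ v0 v0) (fun a => FLab 1 a v0) (FLe _ _ v0 (vS v0)) (FLe2 b0).

End Formulas.

Lemma env_ext0 (T : Type) k (v : 'I_k -> T) p : env_ext v p v0 = p.
Proof. by rewrite /env_ext /v0 unlift_none. Qed.

Lemma env_extS (T : Type) k (v : 'I_k -> T) p x : env_ext v p (vS x) = v x.
Proof. by rewrite /env_ext /vS liftK. Qed.

Section Satisfaction.
Variables (Delta : finType) (nw : nword Delta).
Local Notation n := (size (nw_word nw)).
Variable X : 'I_1 -> {set 'I_n}.
Local Notation sat := (sat X).

Lemma sat_not k (f : fo Delta 1 k) v : sat (FNot f) v = ~~ sat f v.
Proof. by []. Qed.

Lemma sat_and k (f g : fo Delta 1 k) v : sat (FAnd f g) v = sat f v && sat g v.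
Proof. by []. Qed.

Lemma sat_ex k (f : fo Delta 1 k.+1) v : sat (FEx f) v = [exists p, sat f (env_ext v p)].
Proof. by []. Qed.

Lemma sat_or k (f g : fo Delta 1 k) v : sat (FOr f g) v = sat f v || sat g v.
Proof. by rewrite /= negb_and !negbK. Qed.

Lemma sat_iff k (f g : fo Delta 1 k) v : sat (FIff f g) v = (sat f v == sat g v).
Proof. by rewrite /FIff /= !negb_and !negbK; case: (sat f v); case: (sat g v). Qed.

Lemma ord_ltE (x y : 'I_n) : (x <= y) && (x != y) = (x < y).
Proof. by rewrite -(inj_eq val_inj) ltn_neqAle andbC. Qed.

Lemma sat_all k (f : fo Delta 1 k.+1) v : sat (FAll f) v = [forall p, sat f (env_ext v p)].
Proof. by rewrite /= negb_exists; apply: eq_forallb => p; rewrite negbK. Qed.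

Lemma sat_lt k (x y : 'I_k) v : sat (FLt x y) v = (v x < v y).
Proof. by rewrite /= ord_ltE. Qed.

Lemma sat_inX k (x : 'I_k) v : sat (FInX x) v = (v x \in X ord0).
Proof. by []. Qed.

Lemma sat_call k (c : 'I_k) v : sat (FCall c) v = is_call nw (v c).
Proof.
rewrite /= /is_call has_iota_exists; apply: eq_existsb => r.
by rewrite env_ext0 env_extS.
Qed.

Lemma sat_encloses k (c p q : 'I_k) v : sat (FEncloses c p q) v = encloses nw (v c) (v p) (v q).
Proof.
rewrite /= /encloses has_iota_exists; congr andb; apply: eq_existsb => r.
by rewrite !env_ext0 !env_extS.
Qed.

Lemma sat_above k (c' c : 'I_k) v : sat (FAbove c' c) v = above nw (v c') (v c).
Proof.
rewrite /= ord_ltE /above has_iota_exists; congr andb; apply: eq_existsb => r.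
by rewrite !env_ext0 !env_extS ord_ltE.
Qed.

Lemma sat_innermost k (c p q : 'I_k) v :
  sat (FInnermost c p q) v = innermost nw (v c) (v p) (v q).
Proof.
rewrite /FInnermost sat_and sat_not sat_ex sat_encloses /innermost /greatest has_iota_exists.
congr (_ && ~~ _); apply: eq_existsb => c'.
by rewrite sat_and sat_encloses /= ord_ltE !env_ext0 !env_extS.
Qed.

Lemma sat_parent k (c c' : 'I_k) v : sat (FParent c c') v = parent nw (v c) (v c').
Proof.
rewrite /FParent sat_and sat_not sat_ex sat_above /parent /greatest has_iota_exists.
congr (_ && ~~ _); apply: eq_existsb => c''.
by rewrite sat_and sat_above /= ord_ltE !env_ext0 !env_extS.
Qed.

Lemma sat_even_calls b0 : theta_holds (nest_scheme b0) X =
  [forall c : 'I_n, (c \in X ord0) ==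
     is_call nw c && ~~ [exists c' : 'I_n, parent nw c c' && (c' \in X ord0)]].
Proof.
rewrite /theta_holds [sc_theta _]/= /FEvenCalls sat_all; apply: eq_forallb => c.
rewrite sat_iff sat_inX sat_and sat_call sat_not sat_ex env_ext0; congr (_ == (_ && ~~ _)).
by apply: eq_existsb => c'; rewrite sat_and sat_parent sat_inX env_extS !env_ext0.
Qed.

Hypothesis even_X : forall c : 'I_n, (c \in X ord0) = is_call nw c && even_depth nw c.

Lemma sat_even_meet k (p q : 'I_k) v : sat (FEvenMeet p q) v = even_meet nw (v p) (v q).
Proof.
rewrite /FEvenMeet sat_ex /even_meet has_iota_exists; apply: eq_existsb => c.
rewrite sat_and sat_innermost sat_inX even_X !env_ext0 !env_extS.
case inn: (innermost _ _ _ _) => //=.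
by rewrite (encloses_call (p := v p) (q := v q)) //; case/andP: inn.
Qed.

Lemma sat_lt2 b0 k (p q : 'I_k) v : sat (FLt2 b0 p q) v = lt2_nest nw b0 (v p) (v q).
Proof. by rewrite /FLt2 /lt2_nest; case: b0; rewrite ?sat_not sat_even_meet. Qed.

Lemma sat_le2 b0 (x y : 'I_n) : sat (FLe2 b0) (env2 x y) = le2 (lt2_nest nw b0) x y.
Proof.
rewrite /FLe2 !(sat_or, sat_and, sat_not, sat_lt, sat_lt2) /= /le2 -(inj_eq val_inj) /=.
by case: ltngtP; rewrite ?andbF ?orbF ?orbT.
Qed.
End Satisfaction.

Section EvenCalls.
Variables (Delta : finType) (nw : nword Delta) (b0 : bool).
Local Notation n := (size (nw_word nw)).

Definition even_calls : {set 'I_n} := [set c : 'I_n | is_call nw c && even_depth nw c].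

Lemma theta_even_calls : theta_holds (nest_scheme b0) (fun _ => even_calls).
Proof.
rewrite sat_even_calls; apply/forallP => c; rewrite inE even_depth_exists.
by apply/eqP; congr (_ && ~~ _); apply: eq_existsb => c'; rewrite inE.
Qed.

Lemma even_calls_of_theta X : theta_holds (nest_scheme b0) X -> X ord0 = even_calls.
Proof.
rewrite sat_even_calls => /forallP theta; apply/setP => c; rewrite inE.
elim: c.+1 {-2}c (ltnSn c) => // m IH {}c lt_cm.
rewrite (eqP (theta c)) even_depth_exists; congr (_ && ~~ _); apply: eq_existsb => c'.
case par: (parent nw c c') => //=; rewrite IH //.
by have := parent_lt par; lia.
Qed.

Lemma def_str_pos_str X : X ord0 = even_calls ->
  tiso (def_str (nest_scheme b0) X) (pos_str nw (lt2_nest nw b0) 0 n).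
Proof.
move=> X_even; have even_X c : (c \in X ord0) = is_call nw c && even_depth nw c.
  by rewrite X_even inE.
have all_in (x : 'I_n) : 0 <= x < n by rewrite ltn_ord.
exists (fun x => exist _ (val x) (all_in (val x))); split; last first.
  by split=> //; split=> // x y; symmetry; apply: sat_le2.
apply: inj_surj_bij => [x y /(congr1 val) /= /val_inj // | [p p_in]].
by exists (exist _ p (eqxx p)); apply: val_inj.
Qed.

End EvenCalls.

Theorem phi_unamb_FO_definable (Delta : finType) (b0 : bool) :
  unamb_FO_definable (fun nw : nword Delta =>
    tstr_of_opt (phi nw (size (nw_word nw)) b0 0 (size (nw_word nw)))).
Proof.
exists 1, (nest_scheme b0); split.
  move=> nw _ X X' thX thX' _; apply: functional_extensionality => Y.
  by rewrite (ord1 Y) (even_calls_of_theta thX) (even_calls_of_theta thX').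
move=> nw [_ nest]; split; first by exists (fun _ => even_calls nw); exact: theta_even_calls.
move=> X thX; apply: tiso_trans (def_str_pos_str b0 (even_calls_of_theta thX)) _.
exact/tiso_sym/phi_word_pos_str.
Qed.

Theorem corollary5p4 (Delta : finType) :
  unamb_FO_definable (@PhiC Delta) /\ unamb_FO_definable (@PhiB Delta).
Proof. by split; apply: phi_unamb_FO_definable. Qed.
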